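(* Let $\alpha\in(0,\frac12)$ and $d\ge2$ be such that $(d+1)\alpha\notin\mathbb{Z}$. Then there is no real linear subspace of $\mathbb{C}^{\mathcal A_d}$, other than $\{0\}$ and $\mathbb{C}^{\mathcal A_d}$, which is invariant under every $L_p$, $p\in\mathcal A_d$.
   Context: $\mathcal A_d=\{1-d,3-d,\dots,d-1\}$ (ordered as integers), $(e_q)_{q\in\mathcal A_d}$ the canonical basis of $\mathbb{C}^{\mathcal A_d}$, $\rho=e^{2\pi i\alpha}$, $\zeta=\rho^{-1}$. For $p\in\mathcal A_d$, $L_p$ is the $\mathbb{C}$-linear operator with $L_p(e_q)=e_q-e_p$ if $q>p$, $L_p(e_q)=e_q-\zeta e_p$ if $q<p$, and $L_p(e_p)=-\zeta e_p$. *)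

From HB Require Import structures.
From mathcomp Require Import all_boot all_order all_algebra.
From mathcomp Require Import all_classical all_reals.
From mathcomp Require Import trigo.
From mathcomp Require Import complex.
Set Implicit Arguments. Unset Strict Implicit. Unset Printing Implicit Defensive.
Import Order.TTheory GRing.Theory Num.Theory.
Local Open Scope ring_scope.
Local Open Scope complex_scope.

(* A_d = {1-d, 3-d, ..., d-1} is indexed by 'I_d via i |-> 2i+1-d;
   this bijection is increasing, so the integer order on A_d is the order of 'I_d. *)

Definition rho (R : realType) (alpha : R) : R[i] :=
  (cos (2 * pi * alpha)) +i* (sin (2 * pi * alpha)).
Definition zeta (R : realType) (alpha : R) : R[i] := (rho alpha)^-1.

Definition basisv {R : realType} {d : nat} (q : 'I_d) : 'cV[R[i]]_d := delta_mx q 0.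

Definition Lbasis (R : realType) (alpha : R) (d : nat) (p q : 'I_d) : 'cV[R[i]]_d :=
  if (p < q)%N then basisv q - basisv p
  else if (q < p)%N then basisv q - zeta alpha *: basisv p
  else - (zeta alpha *: basisv p).

Definition Lop (R : realType) (alpha : R) (d : nat) (p : 'I_d) (v : 'cV[R[i]]_d)
  : 'cV[R[i]]_d := \sum_(q < d) v q 0 *: Lbasis alpha p q.

Definition real_subspace (R : realType) (d : nat) (V : 'cV[R[i]]_d -> Prop) : Prop :=
  [/\ V 0,
      (forall u v, V u -> V v -> V (u + v)) &
      (forall (r : R) v, V v -> V ((r%:C) *: v))].

From mathcomp Require Import all_boot all_order all_algebra.
From mathcomp Require Import all_classical all_reals.
From mathcomp Require Import trigo.
From mathcomp Require Import complex.
From mathcomp Require Import ring lra zify.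
Import Order.TTheory GRing.Theory Num.Theory.
Local Open Scope ring_scope.
Set Implicit Arguments. Unset Strict Implicit. Unset Printing Implicit Defensive.

(* Write L_p v = v - f_p(v) e_p, where f_p(v) = sum_q c_pq v_q with
   c_pq = zeta [q <= p] + [p <= q].  An invariant real subspace V therefore
   contains f_p(v) e_p for every v in V.  If one of these vectors c e_p is
   nonzero, V also contains L_p (c e_p) = - zeta c e_p; since zeta is not real,
   c and zeta c span C over R, so V contains the line C e_p, and then every
   line C e_q because no c_qp vanishes: V is everything.  Otherwise all f_p(v)
   vanish; the differences f_(p+1) - f_p = zeta v_(p+1) - v_p make v geometric
   with ratio rho, and the first and last forms then give rho^(d+1) v_0 = v_0.
   As (d+1) alpha is not an integer, rho^(d+1) <> 1, hence v = 0. *)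

Section Trigonometry.
Variable R : realType.

Lemma cosD2piz (x : R) (k : int) : cos (x + pi *+ 2 * k%:~R) = cos x.
Proof.
case: k => m; first by rewrite mulr_natr (periodicn (@cosD2pi R)).
rewrite NegzE mulrN -[in RHS](subrK (pi *+ 2 * m.+1%:R) x).
by rewrite mulr_natr (periodicn (@cosD2pi R)).
Qed.

Lemma cos_2pi_mul_eq1 (t : R) : cos (pi *+ 2 * t) = 1 -> exists k : int, t = k%:~R.
Proof.
move=> cos1; exists (Num.floor t).
have /andP[floor_le lt_floor] := floor_itv t; rewrite intrD in lt_floor.
set s := t - (Num.floor t)%:~R.
have cos_s : cos ((pi * s) *+ 2) = 1.
  have -> : (pi * s) *+ 2 = pi *+ 2 * t + pi *+ 2 * (- Num.floor t)%:~R.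
    by rewrite /s intrN; ring.
  by rewrite cosD2piz.
have sin_s : sin (pi * s) = 0.
  apply/eqP; rewrite -sqrf_eq0 sin2cos2; move: cos_s; rewrite cos_mulr2n mulr2n.
  by move=> ?; apply/eqP; lra.
have pi_gt0 := pi_gt0 R.
have [s_eq0|s_neq0] := eqVneq s 0; first by move/eqP: s_eq0; rewrite subr_eq0 => /eqP.
have s_gt0 : 0 < s by rewrite lt_def s_neq0 subr_ge0.
have s_lt1 : s < 1 by rewrite /s; lra.
have : 0 < sin (pi * s).
  by apply: sin_gt0_pi; rewrite mulr_gt0 //= -subr_gt0 -{1}[pi]mulr1 -mulrBr mulr_gt0 // subr_gt0.
by rewrite sin_s ltxx.
Qed.

End Trigonometry.

Section RhoZeta.
Local Open Scope complex_scope.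
Variables (R : realType) (alpha : R).
Local Notation theta := (2 * pi * alpha).

Lemma rhoX n : rho alpha ^+ n = cos (theta *+ n) +i* sin (theta *+ n).
Proof.
elim: n => [|n IHn]; first by rewrite expr0 !mulr0n cos0 sin0.
rewrite exprSr IHn /rho (mulrSr theta) cosD sinD.
by apply/eqP; rewrite eq_complex /=; apply/andP; split; apply/eqP; ring.
Qed.

Lemma mul_rho_conj : rho alpha * (cos theta -i* sin theta) = 1.
Proof.
apply/eqP; rewrite eq_complex /=; apply/andP; split; apply/eqP; last by ring.
by rewrite -[RHS](cos2Dsin2 theta); ring.
Qed.

Lemma zetaE : zeta alpha = cos theta -i* sin theta.
Proof. exact: mulr1_eq mul_rho_conj. Qed.

Lemma mul_rho_zeta : rho alpha * zeta alpha = 1.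
Proof. by rewrite zetaE mul_rho_conj. Qed.

Lemma rhoX_eq1 n : rho alpha ^+ n = 1 -> exists k : int, n%:R * alpha = k%:~R.
Proof.
rewrite rhoX => /(congr1 (@complex.Re R)) /= cos_eq1; apply: cos_2pi_mul_eq1.
by rewrite -[RHS]cos_eq1 -mulr_natr; congr cos; ring.
Qed.

Lemma Im_zeta_neq0 : 0 < alpha -> alpha < 1 / 2 -> complex.Im (zeta alpha) != 0.
Proof.
move=> alpha_gt0 alpha_lt_half; rewrite zetaE /= oppr_eq0.
have pi_gt0 := pi_gt0 R.
by apply/lt0r_neq0/sin_gt0_pi/andP; split; nra.
Qed.

End RhoZeta.

Section NonrealSpan.
Local Open Scope complex_scope.
Variable R : rcfType.

Lemma nonreal_neq_realC (z : R[i]) (r : R) : complex.Im z != 0 -> z != r%:C.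
Proof. by apply: contraNneq => ->. Qed.

Lemma span_nonreal (z c w : R[i]) : complex.Im z != 0 -> c != 0 ->
  exists a b : R, w = a%:C * c + b%:C * (z * c).
Proof.
move=> z_nonreal c_neq0.
suff [a [b w_div_c]] : exists a b : R, w / c = a%:C + b%:C * z.
  by exists a, b; rewrite mulrA -mulrDl -w_div_c mulfVK.
move: z_nonreal; case: z => x y /= y_neq0; case: (w / c) => u v.
exists (u - v / y * x), (v / y).
by apply/eqP; rewrite eq_complex /=; apply/andP; split; apply/eqP; field.
Qed.

End NonrealSpan.

Section LinearForms.
Variables (R : realType) (alpha : R) (d : nat).
Local Notation z := (zeta alpha).
Implicit Types (p q : 'I_d) (v : 'cV[R[i]]_d).

Definition Lcoef p q : R[i] :=
  (if (q <= p)%N then z else 0) + (if (p <= q)%N then 1 else 0).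

Definition Lform p v : R[i] := \sum_q Lcoef p q * v q 0.

Lemma LbasisE p q : Lbasis alpha p q = basisv q - Lcoef p q *: basisv p.
Proof.
rewrite /Lbasis /Lcoef; case: ltngtP => [||/val_inj ->].
- by rewrite add0r scale1r.
- by rewrite addr0.
- by rewrite scalerDl scale1r opprD addrCA subrr addr0.
Qed.

Lemma sum_basisv v : \sum_q v q 0 *: basisv q = v.
Proof. by rewrite [RHS]matrix_sum_delta; apply: eq_bigr => q _; rewrite big_ord1. Qed.

Lemma LopE p v : Lop alpha p v = v - Lform p v *: basisv p.
Proof.
rewrite /Lop; under eq_bigr do rewrite LbasisE scalerBr scalerA.
rewrite sumrB sum_basisv /Lform scaler_suml; congr (_ - _).
by apply: eq_bigr => q _; rewrite mulrC.
Qed.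

Lemma Lform_scale_basisv p q c : Lform p (c *: basisv q) = Lcoef p q * c.
Proof.
rewrite /Lform (bigD1 q) //= big1 => [|r /negbTE r_neq_q].
  by rewrite !mxE eqxx mulr1 addr0.
by rewrite !mxE r_neq_q mulr0 mulr0.
Qed.

Lemma Lcoef_neq0 p q : complex.Im z != 0 -> Lcoef p q != 0.
Proof.
move=> z_nonreal; have z_neq0 := nonreal_neq_realC 0 z_nonreal.
rewrite /Lcoef; case: ltngtP => _; rewrite ?add0r ?addr0 ?oner_eq0 //.
by rewrite addr_eq0 -(rmorphN1 (real_complex R)) nonreal_neq_realC.
Qed.

Lemma sum_ifeq_mull j (a : R[i]) (f : 'I_d -> R[i]) :
  \sum_q (if q == j then a else 0) * f q = a * f j.
Proof. by rewrite (bigD1 j) //= eqxx big1 ?addr0 // => q /negbTE ->; rewrite mul0r. Qed.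

Lemma Lcoef_succ p p' q : p'.+1 = p :> nat ->
  Lcoef p q - Lcoef p' q = (if q == p then z else 0) - (if q == p' then 1 else 0).
Proof.
move=> succ_p; rewrite /Lcoef -!(inj_eq val_inj) /= -succ_p.
by repeat case: ifPn => ?; try (exfalso; lia); ring.
Qed.

Lemma Lform_succ p p' v : p'.+1 = p :> nat ->
  Lform p v - Lform p' v = z * v p 0 - v p' 0.
Proof.
move=> succ_p; rewrite /Lform -sumrB.
under eq_bigr do rewrite -mulrBl Lcoef_succ // mulrBl.
by rewrite sumrB !sum_ifeq_mull mul1r.
Qed.

End LinearForms.

Section LformKernel.
Variables (R : realType) (alpha : R) (n : nat).
Local Notation z := (zeta alpha).
Local Notation rho := (rho alpha).
Implicit Types v : 'cV[R[i]]_n.+1.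

Lemma Lform_ord0 v : Lform alpha ord0 v = z * v ord0 0 + \sum_q v q 0.
Proof.
rewrite /Lform /Lcoef.
under eq_bigr do rewrite leqn0 -[(_ == 0)%N]/(_ == ord0) leq0n mulrDl mul1r.
by rewrite big_split /= sum_ifeq_mull.
Qed.

Lemma Lform_ord_max v : Lform alpha ord_max v = z * \sum_q v q 0 + v ord_max 0.
Proof.
rewrite /Lform /Lcoef.
have ge_max (q : 'I_n.+1) : (n <= q)%N = (q == ord_max) by rewrite -val_eqE /= eqn_leq leq_ord.
under eq_bigr do rewrite leq_ord ge_max mulrDl.
by rewrite big_split /= sum_ifeq_mull mul1r mulr_sumr.
Qed.

Section Kernel.
Variable v : 'cV[R[i]]_n.+1.
Hypothesis Lform_v : forall p, Lform alpha p v = 0.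

Lemma Lform_eq0_geometric q : v q 0 = rho ^+ q * v ord0 0.
Proof.
rewrite -[in LHS](inord_val q); have := ltn_ord q; rewrite ltnS.
elim: (nat_of_ord q) => [_|k IHk lt_kn].
  by rewrite expr0 mul1r; congr (v _ _); apply: val_inj; rewrite /= inordK.
have le_kn := ltnW lt_kn.
have := @Lform_succ _ alpha _ (inord k.+1) (inord k) v.
rewrite !inordK ?ltnS // => /(_ erefl); rewrite !Lform_v subrr.
move/eqP; rewrite eq_sym subr_eq0 IHk // => /eqP rho_k.
by rewrite exprS -mulrA -rho_k mulrA mul_rho_zeta mul1r.
Qed.

Lemma Lform_eq0_trivial : rho ^+ n.+2 != 1 -> v = 0.
Proof.
move=> rho_neq1.
have sum_v : \sum_q v q 0 = - (z * v ord0 0).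
  by have := Lform_ord0 v; rewrite Lform_v => /eqP; rewrite eq_sym addrC addr_eq0 => /eqP.
have last_v : v ord_max 0 = z * (z * v ord0 0).
  have := Lform_ord_max v; rewrite Lform_v sum_v => /eqP.
  by rewrite eq_sym addrC addr_eq0 mulrN opprK => /eqP.
have rho_v0 : rho ^+ n.+2 * v ord0 0 = v ord0 0.
  have max_v : v ord_max 0 = rho ^+ n * v ord0 0 := Lform_eq0_geometric ord_max.
  rewrite !exprS -!mulrA -max_v last_v (mulrA rho z) mul_rho_zeta mul1r.
  by rewrite mulrA mul_rho_zeta mul1r.
have : v ord0 0 * (rho ^+ n.+2 - 1) = 0 by rewrite mulrBr mulr1 mulrC rho_v0 subrr.
move/eqP; rewrite mulf_eq0 subr_eq0 (negbTE rho_neq1) orbF => /eqP v0_eq0.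
by apply/matrixP => q j; rewrite ord1 mxE Lform_eq0_geometric v0_eq0 mulr0.
Qed.

End Kernel.
End LformKernel.

Section InvariantSubspace.
Local Open Scope complex_scope.
Variables (R : realType) (alpha : R) (d : nat) (V : 'cV[R[i]]_d -> Prop).
Local Notation z := (zeta alpha).
Hypothesis V0 : V 0.
Hypothesis VD : forall u v, V u -> V v -> V (u + v).
Hypothesis VZ : forall (r : R) v, V v -> V (r%:C *: v).
Hypothesis VL : forall p v, V v -> V (Lop alpha p v).
Hypothesis z_nonreal : complex.Im z != 0.
Implicit Types (p : 'I_d) (v : 'cV[R[i]]_d).

Lemma subspaceN v : V v -> V (- v).
Proof. by move=> /(VZ (-1)); rewrite rmorphN1 scaleN1r. Qed.

Lemma subspace_Lform p v : V v -> V (Lform alpha p v *: basisv p).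
Proof. by move=> Vv; have := VD Vv (subspaceN (VL p Vv)); rewrite LopE subKr. Qed.

Lemma subspace_mul_zeta p c : V (c *: basisv p) -> V ((z * c) *: basisv p).
Proof.
move=> Vc; have := VD (subspace_Lform p Vc) (subspaceN Vc).
by rewrite Lform_scale_basisv /Lcoef leqnn -scalerBl; congr (V (_ *: _)); ring.
Qed.

Lemma subspace_line p c : V (c *: basisv p) -> c != 0 -> forall w, V (w *: basisv p).
Proof.
move=> Vc c_neq0 w; have [a [b ->]] := span_nonreal w z_nonreal c_neq0.
rewrite scalerDl; apply: VD; rewrite -scalerA; apply: VZ => //.
exact: subspace_mul_zeta.
Qed.

Lemma subspace_full p : (forall w, V (w *: basisv p)) -> forall v, V v.
Proof.
move=> V_line_p.
have V_lines q w : V (w *: basisv q).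
  have := subspace_Lform q (V_line_p (w / Lcoef alpha q p)).
  by rewrite Lform_scale_basisv mulrC divfK // Lcoef_neq0.
by move=> v; rewrite -(sum_basisv v); apply: big_ind => // q _.
Qed.

End InvariantSubspace.

Theorem mainTheorem18 (R : realType) (alpha : R) (d : nat) :
  0 < alpha -> alpha < 1 / 2 -> (2 <= d)%N ->
  (forall z : int, (d.+1)%:R * alpha != z%:~R) ->
  forall V : 'cV[R[i]]_d -> Prop,
    real_subspace V ->
    (forall (p : 'I_d) v, V v -> V (Lop alpha p v)) ->
    (forall v, V v <-> v = 0) \/ (forall v, V v).
Proof.
move=> alpha_gt0 alpha_lt_half; case: d => // n _ not_int V [V0 VD VZ] VL.
have z_nonreal := Im_zeta_neq0 alpha_gt0 alpha_lt_half.
have rho_neq1 : rho alpha ^+ n.+2 != 1.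
  by apply/eqP => /rhoX_eq1 [k int_k]; have := not_int k; rewrite int_k eqxx.
have [[v [Vv v_neq0]] | V_zero] := pselect (exists v, V v /\ v != 0); last first.
  left=> v; split=> [Vv|-> //]; apply/eqP; apply: contra_notT V_zero => v_neq0.
  by exists v.
right.
have [[p Lv_neq0] | Lv_eq0] := pselect (exists p, Lform alpha p v != 0).
  apply: (@subspace_full _ _ _ _ V0 VD VZ VL z_nonreal p).
  exact: (subspace_line VD VZ VL z_nonreal (subspace_Lform VD VZ VL p Vv) Lv_neq0).
case/eqP: v_neq0; apply: (Lform_eq0_trivial _ rho_neq1) => p.
by apply/eqP; apply: contra_notT Lv_eq0 => Lv_neq0; exists p.
Qed.
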